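(* Let $N_A\ge 1$ be an integer, let $d_1,\dots,d_{N_A}\in\mathbb{R}$, and let $G_N$ be a finite set with $|G_N|$ elements. Consider the optimization problem: minimize $d\in\mathbb{R}$ subject to $$d-\sum_{i\in G_N} x_{ik}\ \ge\ d_k\quad \forall k=1,\dots,N_A,\qquad \sum_{k=1}^{N_A}x_{ik}=1\quad\forall i\in G_N,\qquad x_{ik}\in\{0,1\}.$$ Let $d_{\bar k}=\max_{k=1,\dots,N_A} d_k$ and $\Delta N=\sum_{i=1}^{N_A}\lfloor d_{\bar k}-d_i\rfloor$. Then the optimal value $d^*$ equals $$d^*=\begin{cases} d_{\bar k}, & \text{if } |G_N|\le \Delta N,\\[4pt] \displaystyle\min_{j=1,\dots,N_A}\left\{ d_j+\left\lceil \frac{|G_N|+\sum_{k=1}^{N_A}\lceil d_k-d_j\rceil}{N_A}\right\rceil\right\}, & \text{otherwise.}\end{cases}$$ *)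

From mathcomp Require Import all_boot all_order all_algebra.
From mathcomp Require Import all_classical all_reals.
Set Implicit Arguments. Unset Strict Implicit. Unset Printing Implicit Defensive.
Import Order.TTheory GRing.Theory Num.Theory.
Local Open Scope ring_scope.

(* MathComp (R : realType).  Agents are indexed by 'I_NA (k = 1..NA
   in the paper corresponds to k : 'I_NA), the finite set G_N is a finType G,
   and |G_N| = #|G|. *)

Definition feasible (R : realType) (G : finType) (NA : nat)
  (dk : 'I_NA -> R) (d : R) : Prop :=
  exists x : G -> 'I_NA -> R,
    [/\ forall i k, x i k = 0 \/ x i k = 1,
        forall k, d - \sum_(i : G) x i k >= dk k
      & forall i, \sum_(k < NA) x i k = 1].

Definition optimal_value (R : realType) (G : finType) (NA : nat)
  (dk : 'I_NA -> R) (v : R) : Prop :=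
  feasible G dk v /\ forall d, feasible G dk d -> v <= d.

(* d_kbar = max_k d_k  (k0 is any index, used as the seed of the fold). *)
Definition dmax (R : realType) (NA : nat) (k0 : 'I_NA) (dk : 'I_NA -> R) : R :=
  \big[Num.max/dk k0]_(k < NA) dk k.

Definition DeltaN (R : realType) (NA : nat) (k0 : 'I_NA) (dk : 'I_NA -> R) : int :=
  \sum_(i < NA) Num.floor (dmax k0 dk - dk i).

Definition candidate (R : realType) (NA : nat) (nG : nat)
  (dk : 'I_NA -> R) (j : 'I_NA) : R :=
  dk j + (Num.ceil ((nG%:R + \sum_(k < NA) ((Num.ceil (dk k - dk j))%:~R : R))
                    / NA%:R))%:~R.

Definition min_candidate (R : realType) (NA : nat) (k0 : 'I_NA) (nG : nat)
  (dk : 'I_NA -> R) : R :=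
  \big[Num.min/candidate nG dk k0]_(j < NA) candidate nG dk j.

From mathcomp Require Import all_boot all_order all_algebra.
From mathcomp Require Import all_classical all_reals.
Set Implicit Arguments. Unset Strict Implicit. Unset Printing Implicit Defensive.
Import Order.TTheory GRing.Theory Num.Theory.
Local Open Scope ring_scope.

(* A level d is feasible exactly when d >= d_k for all k and the number of
   free unit slots below d, capacity d = sum_k floor (d - d_k), is at least |G|:
   assigning items to agent k fills its slots one by one, and conversely items
   can be poured into any supply of slots.  So the optimum is the least
   d >= max_k d_k of capacity >= |G|.  When the maximum itself has enough
   capacity it is optimal.  Otherwise note that capacity (d_j + m) equals
   m N_A - sum_k ceil (d_k - d_j) for integers m, so the j-th candidate is the
   least point d_j + m of sufficient capacity, and every feasible d lies above
   one of them. *)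

Lemma bounded_fiber_map (T I : finType) (n : I -> nat) :
  (#|T| <= \sum_i n i)%N ->
  exists f : T -> I, forall k, (#|[set x | f x == k]| <= n k)%N.
Proof.
(* Inject [T] into the disjoint union of [n k] slots for each [k]. *)
move=> leTn; pose S := {k : I & 'I_(n k)}.
have cardS : #|{: S}| = (\sum_i n i)%N.
  rewrite card_tagged sumnE big_map big_enum.
  by apply: eq_bigr => k _; rewrite card_ord.
have leTS : (#|T| <= #|{: S}|)%N by rewrite cardS.
pose g x : S := enum_val (widen_ord leTS (enum_rank x)).
have g_inj : injective g.
  by move=> x y /enum_val_inj/(congr1 val) eq_xy; apply/enum_rank_inj/val_inj.
exists (fun x => tag (g x)) => k.
rewrite -(card_imset _ g_inj) -(card_ord (n k)) -cardsT.
apply: leq_trans (leq_imset_card (Tagged (fun i => 'I_(n i)) (i:=k)) _).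
apply: subset_leq_card; apply/fintype.subsetP => p /imsetP[x]; rewrite inE => /eqP <- ->.
by case: (g x) => k' t; apply: imset_f.
Qed.

Lemma sumr_pred_card (R : pzSemiRingType) (T : finType) (P : pred T) :
  \sum_i ((P i)%:R : R) = #|[set x | P x]|%:R.
Proof.
rewrite -sum1_card natr_sum [RHS]big_mkcond /=.
by apply: eq_bigr => i _; rewrite inE; case: (P i).
Qed.

Lemma bigmin_attained (disp : Order.disp_t) (T : orderType disp) (I : finType)
    (F : I -> T) (i0 : I) :
  exists j, \big[Order.min/F i0]_i F i = F j.
Proof.
elim/big_ind: _ => [|_ _ [a ->] [b ->]|i _]; [by exists i0 | | by exists i].
by case: leP; [exists a | exists b].
Qed.

Section Capacity.
Variables (R : realType) (NA : nat) (dk : 'I_NA -> R).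

Definition capacity (d : R) : int := \sum_(k < NA) Num.floor (d - dk k).

Lemma le_capacity : {homo capacity : d e / d <= e}.
Proof. by move=> d e le_de; apply: ler_sum => k _; rewrite le_floor // lerD2r. Qed.

Lemma capacity_shift j (m : int) :
  capacity (dk j + m%:~R) = m *+ NA - \sum_(k < NA) Num.ceil (dk k - dk j).
Proof.
have -> : m *+ NA = \sum_(k < NA) m by rewrite sumr_const card_ord.
rewrite /capacity -sumrB; apply: eq_bigr => k _.
by rewrite addrAC floorDrz ?intr_int // intrKfloor floorNceil opprB addrC.
Qed.

Lemma feasibleP (G : finType) d :
  feasible G dk d <-> (forall k, dk k <= d) /\ #|G|%:Z <= capacity d.
Proof.
split.
- case=> x [x01 x_le x_sum].
  pose load k := #|[set i | x i k == 1]|.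
  have loadE k : \sum_i x i k = (load k)%:R.
    rewrite -sumr_pred_card; apply: eq_bigr => i _.
    by case: (x01 i k) => ->; rewrite ?eqxx // eq_sym oner_eq0.
  have le_load k : dk k + (load k)%:R <= d by rewrite -lerBrDr -loadE.
  split=> [k|]; first by apply: le_trans (le_load k); rewrite lerDl.
  have <- : (\sum_k load k)%N = #|G|.
    apply/eqP; rewrite -(eqr_nat R) natr_sum -(eq_bigr _ (fun k _ => loadE k)).
    by rewrite exchange_big (eq_bigr _ (fun i _ => x_sum i)) sumr_const.
  rewrite (big_morph Posz PoszD (erefl _)); apply: ler_sum => k _.
  by rewrite floor_ge_int lerBrDr addrC; exact: le_load.
- case=> dk_le cap_ge.
  pose n k := `|Num.floor (d - dk k)|%N.
  have nE k : (n k)%:Z = Num.floor (d - dk k).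
    by rewrite gez0_abs // floor_ge0 subr_ge0.
  have : (#|G| <= \sum_k n k)%N.
    by rewrite -lez_nat (big_morph Posz PoszD (erefl _)) (eq_bigr _ (fun k _ => nE k)).
  move=> /bounded_fiber_map[f le_fiber].
  exists (fun i k => (f i == k)%:R); split.
  + by move=> i k; case: (f i == k); [right | left].
  + move=> k; rewrite sumr_pred_card lerBrDr addrC -lerBrDr.
    apply: le_trans (_ : ((n k)%:Z)%:~R <= _); first by rewrite ler_nat.
    by rewrite nE floor_le.
  + move=> i; rewrite (bigD1 (f i)) //= eqxx big1 ?addr0 // => k.
    by rewrite eq_sym => /negbTE ->.
Qed.

Lemma dmax_le_of_capacity k0 d : DeltaN k0 dk < capacity d -> dmax k0 dk <= d.
Proof.
apply: contraTT; rewrite -ltNge -leNgt => lt_d_dmax.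
exact: le_capacity (ltW lt_d_dmax).
Qed.

Variables (NA_gt0 : (0 < NA)%N) (N : nat).

Lemma candidate_le_shiftE j (m : int) :
  (candidate N dk j <= dk j + m%:~R) = (N%:Z <= capacity (dk j + m%:~R)).
Proof.
rewrite lerD2l ler_int ceil_le_int ler_pdivrMr ?ltr0n // mulr_natr.
by rewrite capacity_shift lerBrDr -(ler_int R) intrD rmorph_sum rmorphMn.
Qed.

Lemma capacity_candidate j : N%:Z <= capacity (candidate N dk j).
Proof. by rewrite -candidate_le_shiftE. Qed.

Lemma candidate_le_of_capacity d :
  N%:Z <= capacity d -> exists j, candidate N dk j <= d.
Proof.
move=> le_N_cap.
(* [s k] is the largest point of the form [dk k + m] below [d]; the largest of
   them has at least the capacity of [d]. *)
pose s k := dk k + (Num.floor (d - dk k))%:~R.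
have [j _ s_max] := @arg_maxP _ _ _ (Ordinal NA_gt0) xpredT s isT.
have le_s_d k : s k <= d by rewrite /s addrC -lerBrDr floor_le.
exists j; apply: le_trans (le_s_d j); rewrite candidate_le_shiftE.
apply: le_trans le_N_cap _; apply: ler_sum => k _.
by rewrite floor_ge_int lerBrDr addrC; exact: s_max.
Qed.

End Capacity.

Theorem lemma2 (R : realType) (G : finType) (NA : nat) (hNA : (0 < NA)%N)
  (dk : 'I_NA -> R) :
  optimal_value G dk
    (if (#|G|%:Z <= DeltaN (Ordinal hNA) dk)
     then dmax (Ordinal hNA) dk
     else min_candidate (Ordinal hNA) #|G| dk).
Proof.
set k0 := Ordinal hNA.
have dmax_ub k : dk k <= dmax k0 dk by exact: le_bigmax.
case: ifPn => [le_G_DeltaN | ]; last rewrite -ltNge => lt_DeltaN_G.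
  split; first exact/feasibleP/(conj dmax_ub le_G_DeltaN).
  by move=> d /feasibleP[dk_le _]; apply/bigmax_leP.
split.
  rewrite /min_candidate; have [j ->] := bigmin_attained (candidate #|G| dk) k0.
  have cap_j := capacity_candidate dk hNA #|G| j.
  apply/feasibleP; split=> // k; apply: le_trans (dmax_ub k) _.
  exact/dmax_le_of_capacity/(lt_le_trans lt_DeltaN_G).
move=> d /feasibleP[_ /(candidate_le_of_capacity hNA)[j le_j_d]].
exact: bigmin_inf le_j_d.
Qed.
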